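(* Let $s_0<s_1<\dots<s_{\ell_x}$ and $t_0<t_1<\dots<t_{\ell_y}$ be real partitions and let $\{C_{ij}\in\mathbb{R}:0\le i\le \ell_x-1,\ 0\le j\le\ell_y-1\}$ be given, with $K:=\max_{i,j}|C_{ij}|>0$ and $\Delta:=\max_{i,j}\{s_{i+1}-s_i,t_{j+1}-t_j\}$. For an integer $\gamma\ge1$ and a pair of real sequences $(p,q)$ set $$\|(p,q)\|_\gamma=\max\Big\{\sup_{n\ge0}\Big|\frac{(n!)^2p_n}{(\gamma K\Delta)^n}\Big|,\ \sup_{n\ge0}\Big|\frac{(n!)^2q_n}{(\gamma K\Delta)^n}\Big|\Big\}.$$ Define sequences $p^{ij},q^{ij}$ by $p^{i0}=q^{0j}=(1,0,0,\dots)$ and recursively $(p^{i,j+1},q^{i+1,j})=\Lambda_{ij}(p^{ij},q^{ij})$, where for $n\ge0$ $$p^{i,j+1}_n=\sum_{k=0}^{n}p^{ij}_k\frac{(C_{ij}(t_{j+1}-t_j))^{n-k}k!}{(n-k)!\,n!}+\sum_{k=1}^{\infty}q^{ij}_k\frac{C_{ij}^n(t_{j+1}-t_j)^{n+k}k!}{(n+k)!\,n!},$$ $$q^{i+1,j}_n=\sum_{k=0}^{n}q^{ij}_k\frac{(C_{ij}(s_{i+1}-s_i))^{n-k}k!}{(n-k)!\,n!}+\sum_{k=1}^{\infty}p^{ij}_k\frac{C_{ij}^n(s_{i+1}-s_i)^{n+k}k!}{(n+k)!\,n!},$$ and write $\Lambda_{ij}:=(p^{i,j+1},q^{i+1,j})$.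 Then for all $0\le i\le\ell_x-1$, $0\le j\le\ell_y-1$, $$\|\Lambda_{ij}\|_{i+j+1}\le f(i+j),\qquad\text{where } f(k):=\prod_{m=0}^{k}I_0(2\sqrt{mK}\,\Delta).$$
   Context: $I_0$ is the zero-order modified Bessel function of the first kind, $I_0(2z)=\sum_{k\ge0}z^{2k}/(k!)^2$. The sequences $p^{ij},q^{ij}$ are the power-series coefficients of the solution $k$ of $\partial^2k/\partial s\partial t=C_{ij}k$ on each cell $[s_i,s_{i+1}]\times[t_j,t_{j+1}]$ with $k(s_0,\cdot)=k(\cdot,t_0)=1$, i.e. $k(s,t_j)=\sum_n p^{ij}_n(s-s_i)^n$ and $k(s_i,t)=\sum_n q^{ij}_n(t-t_j)^n$. *)

From Stdlib Require Import Reals Factorial.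
From Coquelicot Require Import Coquelicot.
Open Scope R_scope.

Definition Rbar_max2 (x y : Rbar) : Rbar :=
  match Rbar_le_dec x y with left _ => y | right _ => x end.

(* max of g 0, ..., g (n-1); 0 for n = 0 (only used on nonnegative data) *)
Fixpoint Rmax_upto (n : nat) (g : nat -> R) : R :=
  match n with
  | O => 0
  | S n' => Rmax (Rmax_upto n' g) (g n')
  end.

Definition Kconst (lx ly : nat) (C : nat -> nat -> R) : R :=
  Rmax_upto lx (fun i => Rmax_upto ly (fun j => Rabs (C i j))).

Definition DeltaC (lx ly : nat) (s t : nat -> R) : R :=
  Rmax (Rmax_upto lx (fun i => s (S i) - s i))
       (Rmax_upto ly (fun j => t (S j) - t j)).

Definition normg (gamma : nat) (K D : R) (p q : nat -> R) : Rbar :=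
  Rbar_max2
    (Sup_seq (fun n => Finite (Rabs ((INR (Factorial.fact n))^2 * p n / (INR gamma * K * D)^n))))
    (Sup_seq (fun n => Finite (Rabs ((INR (Factorial.fact n))^2 * q n / (INR gamma * K * D)^n)))).

Definition e0 : nat -> R := fun n => if Nat.eqb n 0 then 1 else 0.

Definition LamComp (c h : R) (a b : nat -> R) : nat -> R := fun n =>
  sum_f_R0 (fun k => a k * (c * h)^(n - k) * INR (Factorial.fact k)
                      / (INR (Factorial.fact (n - k)) * INR (Factorial.fact n))) n
  + Series (fun k => b (S k) * c^n * h^(n + S k) * INR (Factorial.fact (S k))
                      / (INR (Factorial.fact (n + S k)) * INR (Factorial.fact n))).

Definition Lam (s t : nat -> R) (C : nat -> nat -> R) (i j : nat)
    (pq : (nat -> R) * (nat -> R)) : (nat -> R) * (nat -> R) :=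
  (LamComp (C i j) (t (S j) - t j) (fst pq) (snd pq),
   LamComp (C i j) (s (S i) - s i) (snd pq) (fst pq)).

(* PQ i j = (p^{ij}, q^{ij}) with p^{i0} = q^{0j} = e0 *)
Fixpoint PQ (s t : nat -> R) (C : nat -> nat -> R) (i : nat) {struct i}
    : nat -> (nat -> R) * (nat -> R) :=
  fix inner (j : nat) : (nat -> R) * (nat -> R) :=
    let q := match i with
             | O => e0
             | S i' => snd (Lam s t C i' j (PQ s t C i' j))
             end in
    let p := match j with
             | O => e0
             | S j' => fst (Lam s t C i j' (inner j'))
             end in
    (p, q).

Definition I0 (x : R) : R :=
  Series (fun k => (x / 2)^(2 * k) / (INR (Factorial.fact k))^2).

Fixpoint fB (K D : R) (k : nat) : R :=
  match k with
  | O => I0 (2 * sqrt (INR 0 * K) * D)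
  | S k' => fB K D k' * I0 (2 * sqrt (INR (S k') * K) * D)
  end.

From Stdlib Require Import Reals Lra Lia Psatz Wf_nat.
From Coquelicot Require Import Coquelicot.
Open Scope R_scope.

(* Say a sequence a has rate r and constant M when |a_n| <= M r^n / (n!)^2,
   i.e. its [r]-weighted norm is at most M.  A map Lambda_ij sends two sequences
   of rate r and constant M to sequences of rate r + K Delta and constant
   M I(r Delta), where I(x) = sum_k x^k / (k!)^2 = I0(2 sqrt x): the finite sum
   is dominated termwise by the binomial expansion of (r + K Delta)^n, and the
   infinite tail, using (n+k)! >= n! k!, by (K Delta)^n (I(r Delta) - 1).
   Propagating from (1, 0, 0, ...) along the antidiagonals i + j = m, the rate
   after m steps is m K Delta and the constant picks up the factor
   I(m K Delta^2) = I0(2 sqrt(m K) Delta) at step m. *)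

Local Notation factR n := (INR (Factorial.fact n)).

Lemma factR_pos n : 0 < factR n.
Proof. apply lt_0_INR, Factorial.lt_O_fact. Qed.

Lemma fact_mul_le n m : (Factorial.fact n * Factorial.fact m <= Factorial.fact (n + m))%nat.
Proof.
  induction m as [|m IH].
  - rewrite Nat.add_0_r. simpl. lia.
  - rewrite Nat.add_succ_r. simpl. nia.
Qed.

Lemma factR_ratio_le n m : factR m / (factR (n + m) * factR n) <= / factR n ^ 2.
Proof.
  pose proof (factR_pos n). pose proof (factR_pos m).
  assert (Hle : factR n * factR m <= factR (n + m))
    by (rewrite <- mult_INR; apply le_INR, fact_mul_le).
  apply Rle_trans with (factR m / (factR n * factR m * factR n)).
  - apply Rmult_le_compat_l; [lra|].
    apply Rinv_le_contravar; [repeat apply Rmult_lt_0_compat; lra|]. apply Rmult_le_compat_r; lra.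
  - right. field. split; lra.
Qed.

Lemma Rabs_scaled_term a P F Dn :
  0 <= F -> 0 < Dn -> Rabs (a * P * F / Dn) = Rabs a * Rabs P * (F / Dn).
Proof.
  intros. unfold Rdiv.
  rewrite !Rabs_mult, Rabs_inv, (Rabs_pos_eq F), (Rabs_pos_eq Dn) by lra. ring.
Qed.

Lemma Series_nonneg (a : nat -> R) :
  (forall n, 0 <= a n) -> ex_series a -> 0 <= Series a.
Proof.
  intros Ha Hex.
  replace 0 with (Series (fun n => 0 * a n)) by (rewrite Series_scal_l; ring).
  apply Series_le; [|exact Hex]. intros n. specialize (Ha n). lra.
Qed.

Definition bessel_sum (x : R) : R := Series (fun k => x ^ k / factR k ^ 2).

Lemma I0_bessel_sum z : I0 (2 * z) = bessel_sum (z ^ 2).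
Proof.
  unfold I0, bessel_sum. apply Series_ext. intros k.
  rewrite pow_mult. do 3 f_equal. field.
Qed.

Lemma ex_series_bessel x : 0 <= x -> ex_series (fun k => x ^ k / factR k ^ 2).
Proof.
  intros Hx.
  apply (@ex_series_le R_AbsRing R_CompleteNormedModule) with (fun k => x ^ k / factR k).
  - intros k. unfold norm; simpl.
    pose proof (factR_pos k).
    assert (1 <= factR k) by (apply (le_INR 1), Factorial.lt_O_fact).
    assert (0 <= x ^ k) by (apply pow_le; lra).
    rewrite Rabs_pos_eq by (apply Rdiv_le_0_compat; nra).
    apply Rmult_le_compat_l; [lra|]. apply Rinv_le_contravar; nra.
  - exists (exp x). eapply is_series_ext; [|exact (is_exp_Reals x)].
    intros k. reflexivity.
Qed.

Lemma bessel_sum_shift x :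
  0 <= x -> Series (fun k => x ^ S k / factR (S k) ^ 2) = bessel_sum x - 1.
Proof.
  intros Hx. unfold bessel_sum.
  rewrite (Series_incr_1 _ (ex_series_bessel x Hx)). simpl. field.
Qed.

Lemma bessel_sum_ge1 x : 0 <= x -> 1 <= bessel_sum x.
Proof.
  intros Hx. pose proof (bessel_sum_shift x Hx) as Hshift.
  enough (0 <= Series (fun k => x ^ S k / factR (S k) ^ 2)) by lra.
  apply Series_nonneg.
  - intros k. pose proof (factR_pos (S k)).
    apply Rdiv_le_0_compat; [apply pow_le; lra | nra].
  - apply (ex_series_incr_1 (fun k => x ^ k / factR k ^ 2)), ex_series_bessel, Hx.
Qed.

Definition weighted_le (r : R) (a : nat -> R) (M : R) : Prop :=
  forall n, Rabs (a n) <= M * r ^ n / factR n ^ 2.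

Lemma weighted_le_nonneg r a M : weighted_le r a M -> 0 <= M.
Proof.
  intros Ha. specialize (Ha 0%nat). simpl in Ha.
  pose proof (Rabs_pos (a 0%nat)). lra.
Qed.

Lemma weighted_le_e0 r M : 0 <= r -> 1 <= M -> weighted_le r e0 M.
Proof.
  intros Hr HM [|n]; unfold e0; simpl.
  - rewrite Rabs_R1. lra.
  - rewrite Rabs_R0. pose proof (factR_pos (S n)). pose proof (pow_le r n Hr).
    apply Rdiv_le_0_compat; [|simpl in *; nra].
    apply Rmult_le_pos; [lra|]. apply Rmult_le_pos; lra.
Qed.

Lemma LamComp_head_le r rho c h a M n :
  0 <= r -> Rabs (c * h) <= rho -> weighted_le r a M ->
  Rabs (sum_f_R0 (fun k => a k * (c * h) ^ (n - k) * factR k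
                            / (factR (n - k) * factR n)) n)
  <= M * (r + rho) ^ n / factR n ^ 2.
Proof.
  intros Hr Hrho Ha.
  pose proof (factR_pos n).
  replace (M * (r + rho) ^ n / factR n ^ 2) with
    (sum_f_R0 (fun k => Binomial.C n k * r ^ k * rho ^ (n - k) * (M / factR n ^ 2)) n)
    by (rewrite <- scal_sum, binomial; field; lra).
  eapply Rle_trans; [apply sum_f_R0_triangle|].
  apply sum_Rle. intros k Hk.
  destruct (Nat.le_exists_sub k n Hk) as [m [-> _]].
  replace (m + k - k)%nat with m by lia. rewrite (Nat.add_comm m k).
  pose proof (factR_pos k). pose proof (factR_pos m). pose proof (factR_pos (k + m)).
  rewrite Rabs_scaled_term, <- RPow_abs by (lra || nra).
  assert (Hpow : Rabs (c * h) ^ m <= rho ^ m) by (apply pow_incr; split; [apply Rabs_pos | exact Hrho]).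
  apply Rle_trans with (M * r ^ k / factR k ^ 2 * rho ^ m * (factR k / (factR m * factR (k + m)))).
  - apply Rmult_le_compat_r; [apply Rdiv_le_0_compat; nra|].
    apply Rmult_le_compat; [apply Rabs_pos | apply pow_le, Rabs_pos | apply Ha | exact Hpow].
  - unfold Binomial.C. replace (k + m - k)%nat with m by lia.
    right. field. lra.
Qed.

Lemma LamComp_tail_term_le r kappa delta c h b M n m :
  0 <= r -> Rabs c <= kappa -> 0 <= h <= delta -> weighted_le r b M ->
  Rabs (b m * c ^ n * h ^ (n + m) * factR m / (factR (n + m) * factR n))
  <= M * (kappa * delta) ^ n / factR n ^ 2 * ((r * delta) ^ m / factR m ^ 2).
Proof.
  intros Hr Hc Hh Hb.
  pose proof (factR_pos n). pose proof (factR_pos m). pose proof (factR_pos (n + m)).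
  pose proof (weighted_le_nonneg r b M Hb).
  rewrite Rabs_scaled_term, Rabs_mult, <- !RPow_abs, (Rabs_pos_eq h) by (lra || nra).
  assert (Hb_m := Rabs_pos (b m)).
  assert (Hc_n : 0 <= Rabs c ^ n) by apply pow_le, Rabs_pos.
  assert (Hh_nm : 0 <= h ^ (n + m)) by (apply pow_le; lra).
  apply Rle_trans with (M * r ^ m / factR m ^ 2 * kappa ^ n * delta ^ (n + m) * / factR n ^ 2).
  - apply Rmult_le_compat;
      [repeat apply Rmult_le_pos; assumption | apply Rdiv_le_0_compat; nra | | apply factR_ratio_le].
    apply Rmult_le_compat; [apply Rmult_le_pos; assumption | assumption | | apply pow_incr; lra].
    apply Rmult_le_compat; [assumption | assumption | apply Hb |].
    apply pow_incr. split; [apply Rabs_pos | exact Hc].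
  - right. rewrite !Rpow_mult_distr, pow_add. field. lra.
Qed.

Lemma LamComp_tail_le r kappa delta c h b M n :
  0 <= r -> Rabs c <= kappa -> 0 <= h <= delta -> weighted_le r b M ->
  Rabs (Series (fun k => b (S k) * c ^ n * h ^ (n + S k) * factR (S k)
                          / (factR (n + S k) * factR n)))
  <= M * (kappa * delta) ^ n / factR n ^ 2 * (bessel_sum (r * delta) - 1).
Proof.
  intros Hr Hc Hh Hb.
  set (x := r * delta). assert (Hx : 0 <= x) by (apply Rmult_le_pos; lra).
  set (coef := M * (kappa * delta) ^ n / factR n ^ 2).
  set (u := fun k => b (S k) * c ^ n * h ^ (n + S k) * factR (S k)
                     / (factR (n + S k) * factR n)).
  set (v := fun k => coef * (x ^ S k / factR (S k) ^ 2)).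
  assert (Huv : forall k, Rabs (u k) <= v k)
    by (intros k; exact (LamComp_tail_term_le r kappa delta c h b M n (S k) Hr Hc Hh Hb)).
  assert (Hv : ex_series v).
  { apply (@ex_series_scal_l R_AbsRing R_NormedModule coef).
    apply (ex_series_incr_1 (fun k => x ^ k / factR k ^ 2)), ex_series_bessel, Hx. }
  assert (Hu : ex_series (fun k => Rabs (u k))).
  { apply (@ex_series_le R_AbsRing R_CompleteNormedModule) with v; [|exact Hv].
    intros k. unfold norm; simpl. rewrite Rabs_Rabsolu. apply Huv. }
  eapply Rle_trans; [apply Series_Rabs, Hu|].
  eapply Rle_trans; [apply Series_le; [intros k; split; [apply Rabs_pos | apply Huv] | exact Hv]|].
  unfold v. rewrite Series_scal_l, bessel_sum_shift by exact Hx. lra.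
Qed.

Lemma LamComp_weighted_le r kappa delta c h a b M :
  0 <= r -> Rabs c <= kappa -> 0 <= h <= delta ->
  weighted_le r a M -> weighted_le r b M ->
  weighted_le (r + kappa * delta) (LamComp c h a b) (M * bessel_sum (r * delta)).
Proof.
  intros Hr Hc Hh Ha Hb n. unfold LamComp.
  assert (Hch : Rabs (c * h) <= kappa * delta).
  { rewrite Rabs_mult, (Rabs_pos_eq h) by lra.
    apply Rmult_le_compat; [apply Rabs_pos | lra | exact Hc | lra]. }
  pose proof (LamComp_head_le r (kappa * delta) c h a M n Hr Hch Ha) as Hhead.
  pose proof (LamComp_tail_le r kappa delta c h b M n Hr Hc Hh Hb) as Htail.
  eapply Rle_trans; [apply Rabs_triang|].
  eapply Rle_trans; [apply Rplus_le_compat; [exact Hhead | exact Htail]|].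
  set (B := bessel_sum (r * delta)).
  set (P := (r + kappa * delta) ^ n). set (Q := (kappa * delta) ^ n).
  assert (HB : 1 <= B) by (apply bessel_sum_ge1, Rmult_le_pos; lra).
  assert (Hkd : 0 <= kappa * delta) by (pose proof (Rabs_pos c); apply Rmult_le_pos; lra).
  assert (HQP : Q <= P) by (apply pow_incr; lra).
  assert (HM : 0 <= M / factR n ^ 2).
  { pose proof (factR_pos n). pose proof (weighted_le_nonneg r a M Ha).
    apply Rdiv_le_0_compat; nra. }
  assert (Hgap : 0 <= M / factR n ^ 2 * (B - 1) * (P - Q))
    by (apply Rmult_le_pos; [apply Rmult_le_pos|]; lra).
  pose proof (factR_pos n).
  match goal with |- ?lhs <= ?rhs =>
    replace rhs with (lhs + M / factR n ^ 2 * (B - 1) * (P - Q)) by (field; lra) end.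
  lra.
Qed.

Lemma Sup_seq_le_bound (u : nat -> R) (M : R) :
  (forall n, u n <= M) -> Rbar_le (Sup_seq (fun n => Finite (u n))) (Finite M).
Proof.
  intros Hu. apply Rbar_not_lt_le. intros Hlt.
  apply Sup_seq_minor_lt in Hlt as [n Hn]. simpl in Hn. specialize (Hu n). lra.
Qed.

Lemma weighted_le_coeff r a M n :
  0 < r -> weighted_le r a M -> Rabs (factR n ^ 2 * a n / r ^ n) <= M.
Proof.
  intros Hr Ha. pose proof (factR_pos n). pose proof (pow_lt r n Hr).
  unfold Rdiv. rewrite !Rabs_mult, Rabs_inv, (Rabs_pos_eq (factR n ^ 2)), (Rabs_pos_eq (r ^ n)) by nra.
  apply Rle_trans with (factR n ^ 2 * (M * r ^ n / factR n ^ 2) * / r ^ n).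
  - apply Rmult_le_compat_r; [apply Rlt_le, Rinv_0_lt_compat; lra|].
    apply Rmult_le_compat_l; [nra | apply Ha].
  - right. field. lra.
Qed.

Lemma normg_le gamma K D p q M :
  0 < INR gamma * K * D ->
  weighted_le (INR gamma * K * D) p M -> weighted_le (INR gamma * K * D) q M ->
  Rbar_le (normg gamma K D p q) (Finite M).
Proof.
  intros Hr Hp Hq. unfold normg, Rbar_max2.
  destruct Rbar_le_dec as [_|_]; apply Sup_seq_le_bound; intros n; apply weighted_le_coeff; assumption.
Qed.

Lemma Rmax_upto_nonneg n g : 0 <= Rmax_upto n g.
Proof.
  induction n as [|n IH]; simpl; [lra|].
  eapply Rle_trans; [exact IH | apply Rmax_l].
Qed.

Lemma Rmax_upto_ge n g i : (i < n)%nat -> g i <= Rmax_upto n g.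
Proof.
  induction n as [|n IH]; intros Hi; [lia|]. simpl.
  destruct (Nat.eq_dec i n) as [->|Hne].
  - apply Rmax_r.
  - eapply Rle_trans; [apply IH; lia | apply Rmax_l].
Qed.

Lemma Kconst_nonneg lx ly C : 0 <= Kconst lx ly C.
Proof. apply Rmax_upto_nonneg. Qed.

Lemma DeltaC_nonneg lx ly s t : 0 <= DeltaC lx ly s t.
Proof. eapply Rle_trans; [apply Rmax_upto_nonneg | apply Rmax_l]. Qed.

(* [fB_pred K D m] is f(m - 1), with the empty product f(-1) = 1. *)
Definition fB_pred (K D : R) (m : nat) : R :=
  match m with O => 1 | S m' => fB K D m' end.

Lemma fB_rec K D m :
  0 <= K -> fB K D m = fB_pred K D m * bessel_sum (INR m * K * D * D).
Proof.
  intros HK.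
  assert (HI : I0 (2 * sqrt (INR m * K) * D) = bessel_sum (INR m * K * D * D)).
  { rewrite Rmult_assoc, I0_bessel_sum, Rpow_mult_distr, pow2_sqrt
      by (apply Rmult_le_pos; [apply pos_INR | exact HK]).
    f_equal. ring. }
  destruct m; simpl fB; rewrite <- HI; simpl; ring.
Qed.

Lemma fB_pred_ge1 K D m : 0 <= K -> 1 <= fB_pred K D m.
Proof.
  intros HK. induction m as [|m IH]; simpl; [lra|].
  rewrite fB_rec by exact HK.
  assert (1 <= bessel_sum (INR m * K * D * D)).
  { apply bessel_sum_ge1. rewrite Rmult_assoc. apply Rmult_le_pos.
    - apply Rmult_le_pos; [apply pos_INR | exact HK].
    - apply Rle_0_sqr. }
  nra.
Qed.

Lemma PQ_unfold s t C i j : PQ s t C i j =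
  (match j with O => e0 | S j' => fst (Lam s t C i j' (PQ s t C i j')) end,
   match i with O => e0 | S i' => snd (Lam s t C i' j (PQ s t C i' j)) end).
Proof. destruct i, j; reflexivity. Qed.

Definition weighted_pair_le (r : R) (pq : (nat -> R) * (nat -> R)) (M : R) : Prop :=
  weighted_le r (fst pq) M /\ weighted_le r (snd pq) M.

Section Grid.

Variables (lx ly : nat) (s t : nat -> R) (C : nat -> nat -> R).
Hypothesis Hs : forall i, (i < lx)%nat -> s i < s (S i).
Hypothesis Ht : forall j, (j < ly)%nat -> t j < t (S j).

Local Notation K := (Kconst lx ly C).
Local Notation D := (DeltaC lx ly s t).

Lemma Kconst_ge i j : (i < lx)%nat -> (j < ly)%nat -> Rabs (C i j) <= K.
Proof.
  intros Hi Hj. unfold Kconst.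
  eapply Rle_trans; [|exact (Rmax_upto_ge lx (fun i => Rmax_upto ly (fun j => Rabs (C i j))) i Hi)].
  exact (Rmax_upto_ge ly (fun j => Rabs (C i j)) j Hj).
Qed.

Lemma s_step_le i : (i < lx)%nat -> 0 <= s (S i) - s i <= D.
Proof.
  intros Hi. pose proof (Hs i Hi). split; [lra|].
  eapply Rle_trans; [|apply Rmax_l]. exact (Rmax_upto_ge lx (fun i => s (S i) - s i) i Hi).
Qed.

Lemma t_step_le j : (j < ly)%nat -> 0 <= t (S j) - t j <= D.
Proof.
  intros Hj. pose proof (Ht j Hj). split; [lra|].
  eapply Rle_trans; [|apply Rmax_r]. exact (Rmax_upto_ge ly (fun j => t (S j) - t j) j Hj).
Qed.

Lemma grid_rate_nonneg m : 0 <= INR m * K * D.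
Proof.
  apply Rmult_le_pos; [apply Rmult_le_pos; [apply pos_INR | apply Kconst_nonneg] | apply DeltaC_nonneg].
Qed.

Lemma Lam_weighted_le_step i j m pq :
  (i < lx)%nat -> (j < ly)%nat ->
  weighted_pair_le (INR m * K * D) pq (fB_pred K D m) ->
  weighted_pair_le (INR (S m) * K * D) (Lam s t C i j pq) (fB K D m).
Proof.
  intros Hi Hj [Hp Hq].
  pose proof (grid_rate_nonneg m).
  rewrite S_INR, fB_rec by apply Kconst_nonneg.
  replace ((INR m + 1) * K * D) with (INR m * K * D + K * D) by ring.
  split; apply LamComp_weighted_le; auto using Kconst_ge, s_step_le, t_step_le.
Qed.

Lemma Lam_weighted_le i j :
  (i < lx)%nat -> (j < ly)%nat ->
  weighted_pair_le (INR (S (i + j)) * K * D) (Lam s t C i j (PQ s t C i j)) (fB K D (i + j)).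
Proof.
  remember (i + j)%nat as n eqn:Hn. revert i j Hn.
  induction n as [n IH] using lt_wf_ind. intros i j -> Hi Hj.
  apply Lam_weighted_le_step; [exact Hi | exact Hj |].
  pose proof (grid_rate_nonneg (i + j)).
  pose proof (fB_pred_ge1 K D (i + j) (Kconst_nonneg lx ly C)).
  rewrite PQ_unfold. split; simpl fst; simpl snd.
  - destruct j as [|j']; [apply weighted_le_e0; assumption|].
    replace (i + S j')%nat with (S (i + j')) by lia.
    apply (IH (i + j')%nat ltac:(lia) i j'); [reflexivity | exact Hi | lia].
  - destruct i as [|i']; [apply weighted_le_e0; assumption|].
    replace (S i' + j)%nat with (S (i' + j)) by lia.
    apply (IH (i' + j)%nat ltac:(lia) i' j); [reflexivity | lia | exact Hj].
Qed.

End Grid.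

Theorem mainTheorem4 (lx ly : nat) (s t : nat -> R) (C : nat -> nat -> R)
  (Hs : forall i : nat, (i < lx)%nat -> s i < s (S i))
  (Ht : forall j : nat, (j < ly)%nat -> t j < t (S j))
  (HK : 0 < Kconst lx ly C) :
  forall i j : nat, (i < lx)%nat -> (j < ly)%nat ->
    Rbar_le
      (normg (i + j + 1)%nat (Kconst lx ly C) (DeltaC lx ly s t)
         (fst (Lam s t C i j (PQ s t C i j)))
         (snd (Lam s t C i j (PQ s t C i j))))
      (Finite (fB (Kconst lx ly C) (DeltaC lx ly s t) ((i + j)%nat))).
Proof.
  intros i j Hi Hj.
  rewrite Nat.add_1_r.
  destruct (Lam_weighted_le lx ly s t C Hs Ht i j Hi Hj) as [Hp Hq].
  assert (HD : 0 < DeltaC lx ly s t)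
    by (pose proof (Ht j Hj); pose proof (t_step_le lx ly s t Ht j Hj); lra).
  apply normg_le; [| exact Hp | exact Hq].
  apply Rmult_lt_0_compat; [apply Rmult_lt_0_compat; [apply lt_0_INR; lia | exact HK] | exact HD].
Qed.
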